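(* Let $\alpha,\beta\in\mathbb{Z}[\mathrm{i}]$ with $|\alpha|,|\beta|>1$, and let $D_\alpha,D_\beta\subset\mathbb{Z}[\mathrm{i}]$ be finite sets containing $0$ such that every Gaussian integer has at least one $(\alpha,D_\alpha)$-expansion and at least one $(\beta,D_\beta)$-expansion. Let $(a_z)_{z\in\mathbb{Z}[\mathrm{i}]}$ be a configuration generated by a consistent DFAO $\mathcal{A}_\alpha=(S_\alpha,D_\alpha,\delta_\alpha,s_{0,\alpha},A,\tau_\alpha)$ in base $\alpha$ and by a consistent DFAO $\mathcal{A}_\beta=(S_\beta,D_\beta,\delta_\beta,s_{0,\beta},A,\tau_\beta)$ in base $\beta$. For $s\in S_\beta$ let $L_{\beta,s}=\{w\in D_\beta^*:\delta_\beta(s_{0,\beta},w)=s\}$, for $t\in S_\alpha$ let $L_{\alpha,t}=\{w\in D_\alpha^*:\delta_\alpha(s_{0,\alpha},w)=t\}$, and let $S_\infty=\{s\in S_\beta:[L_{\beta,s}]_\beta\text{ is infinite}\}$. If $\beta$ is not a root of an integer, then for every $s\in S_\infty$ there exists a state $t\in S_\alpha$ and three non-collinear Gaussian integers $x,y,z\in[L_{\beta,s}]_\beta\cap[L_{\alpha,t}]_\alpha$.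
   Context: For $\gamma\in\mathbb{Z}[\mathrm{i}]$ and a word $w=w_{n-1}\cdots w_0$, $[w]_\gamma=\sum_{j}w_j\gamma^j$, and $[L]_\gamma=\{[w]_\gamma:w\in L\}$; $w$ is a $(\gamma,D)$-expansion of $z$ if $[w]_\gamma=z$. A DFAO $(S,D,\delta,s_0,A,\tau)$ has finite state set $S$, transition map $\delta:S\times D\to S$ extended to words by $\delta(s,wa)=\delta(\delta(s,w),a)$, initial state $s_0$, output $\tau:S\to A$; it generates $(a_z)$ in base $\gamma$ and is consistent if $a_z=\tau(\delta(s_0,w))$ for every $w$ with $[w]_\gamma=z$. $\beta$ is a root of an integer if $\beta^n\in\mathbb{Z}$ for some $n\ge1$. *)

(* Gaussian integers are modelled as pairs of integers (re, im). *)
From mathcomp Require Import all_boot all_order all_algebra.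
Set Implicit Arguments. Unset Strict Implicit. Unset Printing Implicit Defensive.
Import Order.TTheory GRing.Theory Num.Theory.
Local Open Scope ring_scope.

Definition gint := (int * int)%type.

Definition g0 : gint := (0, 0).
Definition gadd (x y : gint) : gint := (x.1 + y.1, x.2 + y.2).
Definition gsub (x y : gint) : gint := (x.1 - y.1, x.2 - y.2).
Definition gmul (x y : gint) : gint :=
  (x.1 * y.1 - x.2 * y.2, x.1 * y.2 + x.2 * y.1).
Definition gnorm2 (x : gint) : int := x.1 ^+ 2 + x.2 ^+ 2.
Fixpoint gpow (x : gint) (n : nat) : gint :=
  if n is n'.+1 then gmul (gpow x n') x else (1, 0).

(* A word w = w_{n-1} ... w_0 is the list [:: w_{n-1}; ...; w_0]
   (most significant digit first); [w]_gamma = sum_j w_j gamma^j. *)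
Definition eval_word (gamma : gint) (w : seq gint) : gint :=
  foldl (fun acc d => gadd (gmul acc gamma) d) g0 w.

Definition word_over (D : seq gint) (w : seq gint) : bool := all (fun d => d \in D) w.

Definition all_expansions (gamma : gint) (D : seq gint) : Prop :=
  forall z : gint, exists w, word_over D w /\ eval_word gamma w = z.

Definition delta_star (S : Type) (delta : S -> gint -> S) (s : S) (w : seq gint) : S :=
  foldl delta s w.

(* the DFAO (S, D, delta, s0, A, tau) generates (a_z) in base gamma and is
   consistent: a_z = tau(delta(s0, w)) for every w over D with [w]_gamma = z *)
Definition consistent_generates (S : Type) (A : Type) (gamma : gint) (D : seq gint)
  (delta : S -> gint -> S) (s0 : S) (tau : S -> A) (a : gint -> A) : Prop :=
  forall w, word_over D w -> a (eval_word gamma w) = tau (delta_star delta s0 w).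

Definition in_val_lang (S : Type) (gamma : gint) (D : seq gint)
  (delta : S -> gint -> S) (s0 s : S) (z : gint) : Prop :=
  exists w, word_over D w /\ delta_star delta s0 w = s /\ eval_word gamma w = z.

Definition ginfinite (P : gint -> Prop) : Prop :=
  ~ (exists l : seq gint, forall z, P z -> z \in l).

Definition root_of_integer (beta : gint) : Prop :=
  exists n : nat, (0 < n)%N /\ (gpow beta n).2 = 0.

Definition gcollinear (x y z : gint) : Prop :=
  (y.1 - x.1) * (z.2 - x.2) - (y.2 - x.2) * (z.1 - x.1) = 0.

(* Pumping a long shortest beta-representation of a value in [L_(beta,s)] gives
   values z_k = [u v^k x]_beta of [L_(beta,s)] with z_(k+1) = z_k g + c for
   g = beta^|v|, hence (g - 1)(z_k - z_0) = (z_1 - z_0)(g^k - 1).  As no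
   positive power of g is real and |g| > 1, three such points whose index gaps
   shrink fast enough are never collinear, and among 2|S_alpha| + 1 of them
   three share the state reached by some of their alpha-expansions.  Besides
   [~ root_of_integer beta] and the infinitude of [L_(beta,s)], only
   [1 < |beta|^2] and the existence of alpha-expansions are used. *)

From mathcomp Require Import all_boot all_order all_algebra.
From mathcomp Require Import ring zify.
From Stdlib Require Import Classical.
Set Implicit Arguments. Unset Strict Implicit. Unset Printing Implicit Defensive.
Import Order.TTheory GRing.Theory Num.Theory.
Local Open Scope ring_scope.

Definition g1 : gint := (1, 0).

(* [cross u v] is the imaginary part of [conj u * v]; [gcollinear x y z] says
   [cross (y - x) (z - x) = 0]. *)
Definition cross (u v : gint) : int := u.1 * v.2 - u.2 * v.1.

Ltac gint_ring :=
  rewrite /gmul /gadd /gsub /g0 /g1 /gnorm2 /cross /=;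
  first [apply: injective_projections => /=; ring | ring].

Lemma gmulA x y z : gmul x (gmul y z) = gmul (gmul x y) z.
Proof. gint_ring. Qed.

Lemma gmulC x y : gmul x y = gmul y x.
Proof. gint_ring. Qed.

Lemma gpowD x m n : gpow x (m + n) = gmul (gpow x m) (gpow x n).
Proof.
elim: n => [|n IHn]; last by rewrite addnS /= IHn gmulA.
by rewrite addn0 /=; gint_ring.
Qed.

Lemma gpowM x m n : gpow x (m * n) = gpow (gpow x m) n.
Proof. by elim: n => [|n IHn]; rewrite ?muln0 // mulnS gpowD IHn /= gmulC. Qed.

Lemma gnorm2M x y : gnorm2 (gmul x y) = gnorm2 x * gnorm2 y.
Proof. gint_ring. Qed.

Lemma gnorm2X x n : gnorm2 (gpow x n) = gnorm2 x ^+ n.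
Proof.
elim: n => [|n IHn]; first by rewrite /gnorm2 /= expr1n expr0n.
by rewrite /= gnorm2M IHn exprSr.
Qed.

Lemma sqr_im_le_gnorm2 x : x.2 ^+ 2 <= gnorm2 x.
Proof. by rewrite /gnorm2 lerDr sqr_ge0. Qed.

Lemma gnorm2_gt0 x : x != g0 -> 0 < gnorm2 x.
Proof.
case: x => a b; rewrite /g0 xpair_eqE negb_and /gnorm2 /= => nz.
by case/orP: nz => nz; [rewrite ltr_pwDl ?sqr_ge0 | rewrite ltr_pwDr ?sqr_ge0];
  rewrite // exprn_even_gt0.
Qed.

Lemma cross_mul w u v : cross (gmul w u) (gmul w v) = gnorm2 w * cross u v.
Proof. gint_ring. Qed.

Lemma cross_sub1_mul p r :
  cross (gsub p g1) (gsub (gmul p r) g1) = gnorm2 p * r.2 + p.2 - (gmul p r).2.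
Proof. gint_ring. Qed.

Lemma sqr_norm_gap (P R p2 q2 r2 : int) :
  2 <= R -> 4 * R <= P -> p2 ^+ 2 <= P -> q2 ^+ 2 <= P * R -> r2 != 0 ->
  P * r2 != q2 - p2.
Proof.
move=> R_ge2 PR_le p2_le q2_le r2_neq0; apply/eqP => e.
have P2_le : P ^+ 2 <= (P * r2) ^+ 2.
  by rewrite exprMn ler_peMr ?sqr_ge0 // sqr_intr_ge1 ?intr_int.
have : (P * r2) ^+ 2 <= 2 * q2 ^+ 2 + 2 * p2 ^+ 2.
  rewrite e -subr_ge0 (_ : _ - _ = (q2 + p2) ^+ 2) ?sqr_ge0 //; ring.
rewrite expr2 in P2_le; nia.
Qed.

Section AffineRecurrence.
Variables (g c : gint) (z : nat -> gint).
Hypothesis z_rec : forall k, z k.+1 = gadd (gmul (z k) g) c.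

Lemma affine_rec_step k : gsub (z k.+1) (z k) = gmul (gpow g k) (gsub (z 1) (z 0)).
Proof.
elim: k => [|k IHk]; first by gint_ring.
transitivity (gmul (gsub (z k.+1) (z k)) g); last by rewrite IHk /=; gint_ring.
by rewrite (z_rec k.+1) (z_rec k); gint_ring.
Qed.

Lemma affine_rec_sub a n :
  gmul (gsub g g1) (gsub (z (a + n)) (z a)) =
  gmul (gmul (gsub (z 1) (z 0)) (gpow g a)) (gsub (gpow g n) g1).
Proof.
elim: n => [|n IHn]; first by rewrite addn0 /=; gint_ring.
transitivity (gadd (gmul (gsub g g1) (gsub (z (a + n)) (z a)))
  (gmul (gsub g g1) (gsub (z (a + n).+1) (z (a + n))))).
  by rewrite addnS; gint_ring.
by rewrite IHn (affine_rec_step (a + n)) gpowD /=; gint_ring.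
Qed.
End AffineRecurrence.

Section NonRealPowers.
Variable g : gint.
Hypothesis g_norm : 2 <= gnorm2 g.
Hypothesis g_nonreal : forall n, (0 < n)%N -> (gpow g n).2 != 0.

(* [1], [g^d] and [g^e] are not collinear once [g^d] is much longer than
   [g^(e - d)]: writing [p = g^d] and [r = g^(e - d)], collinearity forces
   [|p|^2 Im r = Im (p r) - Im p], and [|Im r| >= 1] makes the left side too
   large. *)
Lemma cross_gpow_sub1_neq0 d e : (0 < d < e)%N -> (e + 2 <= 2 * d)%N ->
  cross (gsub (gpow g d) g1) (gsub (gpow g e) g1) != 0.
Proof.
case/andP=> d_gt0 lt_de le_ed.
have ge : gpow g e = gmul (gpow g d) (gpow g (e - d)) by rewrite -gpowD subnKC // ltnW.
rewrite ge cross_sub1_mul.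
set p := gpow g d; set r := gpow g (e - d).
have N_gt1 : 1 < gnorm2 g by apply: lt_le_trans g_norm.
have r_ge2 : 2 <= gnorm2 r.
  by rewrite gnorm2X (le_trans g_norm) // ler_eXnr ?subn_gt0 // ltW.
have pr_le : 4 * gnorm2 r <= gnorm2 p.
  rewrite /p /r !gnorm2X -{2}(subnKC (_ : e - d <= d)%N) ?exprD; last by lia.
  rewrite mulrC ler_pM2l ?exprn_gt0 ?(lt_trans ltr01) //.
  rewrite (@le_trans _ _ (gnorm2 g ^+ 2)) ?ler_eXn2l //; last by lia.
  by rewrite expr2 (_ : 4 = 2 * 2) // ler_pM.
have r2_neq0 : r.2 != 0 by rewrite g_nonreal ?subn_gt0.
have q2_le : (gmul p r).2 ^+ 2 <= gnorm2 p * gnorm2 r.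
  by rewrite -gnorm2M sqr_im_le_gnorm2.
apply: contraNneq (sqr_norm_gap r_ge2 pr_le (sqr_im_le_gnorm2 p) q2_le r2_neq0).
by move=> /eqP; rewrite subr_eq0 => /eqP <-; rewrite addrK.
Qed.

Lemma affine_rec_noncollinear (c : gint) (z : nat -> gint) a d e :
  (forall k, z k.+1 = gadd (gmul (z k) g) c) -> z 1 != z 0 ->
  (0 < d < e)%N -> (e + 2 <= 2 * d)%N -> ~ gcollinear (z a) (z (a + d)) (z (a + e)).
Proof.
move=> z_rec z10 de ed col.
(* Multiplying by [g - 1] turns the differences [z (a + d) - z a] and
   [z (a + e) - z a] into [D g^a (g^d - 1)] and [D g^a (g^e - 1)], with
   [D = z 1 - z 0]; both steps scale [cross] by a positive norm. *)
have := cross_mul (gsub g g1) (gsub (z (a + d)) (z a)) (gsub (z (a + e)) (z a)).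
have cross0 : cross (gsub (z (a + d)) (z a)) (gsub (z (a + e)) (z a)) = 0 := col.
rewrite cross0 mulr0 !(affine_rec_sub z_rec) cross_mul => /eqP.
rewrite mulf_eq0 (negPf (cross_gpow_sub1_neq0 de ed)) orbF gnorm2M gnorm2X.
rewrite gt_eqF // mulr_gt0 ?exprn_gt0 ?(lt_le_trans _ g_norm) ?gnorm2_gt0 //.
apply: contra z10 => /eqP; rewrite /gsub /g0 => -[d1 d2].
by apply/eqP/injective_projections; apply/eqP; rewrite -subr_eq0 ?d1 ?d2.
Qed.
End NonRealPowers.

(* The gaps between consecutive indices halve, so any three increasing indices
   [i < j < k] have [spread k - spread i <= 2 (spread j - spread i) - 2]. *)
Definition spread n i := (2 * (2 ^ n - 2 ^ (n - i)))%N.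

Lemma spread_gaps n i j k : (i < j < k)%N -> (k <= n)%N ->
  exists d e, [/\ spread n j = (spread n i + d)%N, spread n k = (spread n i + e)%N,
    (0 < d < e)%N & (e + 2 <= 2 * d)%N].
Proof.
case/andP=> lt_ij lt_jk le_kn.
have gap_ij : (2 * 2 ^ (n - j) <= 2 ^ (n - i))%N by rewrite -expnS leq_exp2l //; lia.
have gap_jk : (2 * 2 ^ (n - k) <= 2 ^ (n - j))%N by rewrite -expnS leq_exp2l //; lia.
have pos_k : (0 < 2 ^ (n - k))%N by rewrite expn_gt0.
have le_i : (2 ^ (n - i) <= 2 ^ n)%N by rewrite leq_exp2l // leq_subr.
by exists (spread n j - spread n i)%N, (spread n k - spread n i)%N; rewrite /spread; split; lia.
Qed.

Lemma pigeonhole3 (S : finType) n (f : 'I_n -> S) : (2 * #|S| < n)%N ->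
  exists i j k : 'I_n, [/\ (i < j < k)%N, f j = f i & f k = f i].
Proof.
move=> card_lt.
have /existsP [t big_fiber] : [exists t, 2 < #|[set i | f i == t]|]%N.
  apply: contraLR card_lt => /existsPn small; rewrite -leqNgt -{1}(card_ord n).
  rewrite -sum1_card (partition_big f predT) //=.
  apply: (@leq_trans (\sum_(s : S) 2)).
    by apply: leq_sum => s _; rewrite sum1dep_card leqNgt small.
  by rewrite sum_nat_const mulnC (eq_card (B := S)).
set C := [set i | f i == t] in big_fiber.
have [i0 Ci0] : exists i0, i0 \in C by apply/card_gt0P; lia.
case: (arg_minnP val Ci0) => i Ci i_min.
case: (arg_maxnP val Ci0) => k Ck k_max.
have [j] : exists j, j \in C :\ i :\ k.
  apply/card_gt0P; move: big_fiber.
  rewrite (cardsD1 i) (Ci : i \in C) (cardsD1 k (C :\ i)) in_setD1 (Ck : k \in C).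
  by case: (k != i); rewrite /= ?add0n !add1n !ltnS // => /ltnW.
rewrite !in_setD1 => /and3P [jk ji Cj].
have ji' : (j : nat) != i := ji.
have jk' : (j : nat) != k := jk.
have le_ij : (i <= j)%N := i_min j Cj.
have le_jk : (j <= k)%N := k_max j Cj.
move: (Ci : i \in C) (Ck : k \in C) Cj; rewrite !inE => /eqP fi /eqP fk /eqP fj.
by exists i, j, k; rewrite !ltn_neqAle le_ij le_jk eq_sym ji' jk' fi fj fk.
Qed.

Lemma foldl_eval_word b acc w :
  foldl (fun acc d => gadd (gmul acc b) d) acc w =
  gadd (gmul acc (gpow b (size w))) (eval_word b w).
Proof.
elim: w acc => [|d w IHw] acc; first by gint_ring.
by rewrite /= IHw {2}/eval_word /= IHw; gint_ring.
Qed.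

Lemma eval_word_cat b w1 w2 :
  eval_word b (w1 ++ w2) = gadd (gmul (eval_word b w1) (gpow b (size w2))) (eval_word b w2).
Proof. by rewrite {1}/eval_word foldl_cat foldl_eval_word. Qed.

Definition pump (u v x : seq gint) k := u ++ flatten (nseq k v) ++ x.

Lemma flatten_nseqSr (T : Type) (v : seq T) k :
  flatten (nseq k.+1 v) = flatten (nseq k v) ++ v.
Proof.
elim: k => [|k IHk]; first by rewrite /= cats0.
by rewrite -[flatten (nseq k.+2 v)]/(v ++ flatten (nseq k.+1 v)) {1}IHk catA.
Qed.

Lemma eval_pumpS b u v x k :
  eval_word b (pump u v x k.+1) =
  gadd (gmul (eval_word b (pump u v x k)) (gpow b (size v)))
       (gsub (eval_word b (v ++ x)) (gmul (eval_word b x) (gpow b (size v)))).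
Proof.
rewrite /pump flatten_nseqSr -catA !catA !eval_word_cat.
gint_ring.
Qed.

Lemma word_over_cat D w1 w2 : word_over D (w1 ++ w2) = word_over D w1 && word_over D w2.
Proof. exact: all_cat. Qed.

Lemma word_over_pump D u v x k :
  word_over D (u ++ v ++ x) -> word_over D (pump u v x k).
Proof.
rewrite /pump !word_over_cat => /and3P [-> Dv ->]; rewrite andbT.
by elim: k => //= k IHk; rewrite word_over_cat Dv.
Qed.

Fixpoint words (D : seq gint) n : seq (seq gint) :=
  if n is n'.+1 then [::] :: [seq d :: w | d <- D, w <- words D n'] else [:: [::]].

Lemma words_spec D n w : (w \in words D n) = word_over D w && (size w <= n)%N.
Proof.
elim: n w => [|n IHn] [|d w] //=; first by rewrite andbF.
rewrite in_cons /=.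
apply/allpairsP/andP.
  move=> [[d' w'] [/= Dd' w'_in]] /= e; case: e => -> ->.
  by move: w'_in; rewrite IHn => /andP [-> ?]; rewrite Dd'.
by case=> /andP [Dd Dw] sw; exists (d, w); rewrite /= IHn Dd Dw.
Qed.

Section DFA.
Variables (S : finType) (delta : S -> gint -> S).

Lemma delta_star_cat s w1 w2 :
  delta_star delta s (w1 ++ w2) = delta_star delta (delta_star delta s w1) w2.
Proof. exact: foldl_cat. Qed.

Lemma delta_star_pump s0 u v x k :
  delta_star delta (delta_star delta s0 u) v = delta_star delta s0 u ->
  delta_star delta s0 (pump u v x k) = delta_star delta s0 (u ++ v ++ x).
Proof.
move=> loop; rewrite /pump !delta_star_cat loop; congr delta_star.
by elim: k => //= k IHk; rewrite delta_star_cat loop.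
Qed.

Lemma dfa_pumping s0 w : (#|S| < size w)%N ->
  exists u v x, [/\ w = u ++ v ++ x, v != [::] &
    delta_star delta (delta_star delta s0 u) v = delta_star delta s0 u].
Proof.
move=> long.
pose q (i : 'I_#|S|.+1) := delta_star delta s0 (take i w).
have /injectivePn [i [j neq_ij qij]] : ~~ injectiveb q.
  by apply/injectiveP => /leq_card; rewrite card_ord ltnn.
wlog lt_ij : i j neq_ij qij / (i < j)%N.
  move=> gen; have [lt_ij|lt_ji|/val_inj eq_ij] := ltngtP i j.
  - exact: gen i j neq_ij qij lt_ij.
  - by apply: (gen j i); rewrite // eq_sym.
  - by rewrite eq_ij eqxx in neq_ij.
have le_jw : (j <= size w)%N := ltnW (leq_trans (ltn_ord j) long).
exists (take i w), (drop i (take j w)), (drop j w); split.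
- by rewrite catA -{1}(take_takel w (ltnW lt_ij)) !cat_take_drop.
- by rewrite -size_eq0 size_drop size_takel // subn_eq0 -ltnNge.
- by rewrite -delta_star_cat -{1}(take_takel w (ltnW lt_ij)) cat_take_drop.
Qed.
End DFA.

Lemma ginfinite_notin (P : gint -> Prop) (l : seq gint) :
  ginfinite P -> exists2 z, P z & z \notin l.
Proof.
move=> P_inf; apply: NNPP => no_witness; apply: P_inf; exists l => z Pz.
by case: (boolP (z \in l)) => // z_notin; case: no_witness; exists z.
Qed.

Section ValueLanguage.
Variables (b : gint) (D : seq gint) (S : finType) (delta : S -> gint -> S) (s0 s : S).
Local Notation L := (in_val_lang b D delta s0 s).

(* A value of [L] outside the finite set of values of words of length at most
   [#|S|] has only long representations; take a shortest one. *)
Lemma val_lang_long_shortest : ginfinite L ->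
  exists w, [/\ word_over D w, delta_star delta s0 w = s, (#|S| < size w)%N &
    forall w', word_over D w' -> delta_star delta s0 w' = s ->
      eval_word b w' = eval_word b w -> (size w <= size w')%N].
Proof.
move=> L_inf.
have [z [w0 [Dw0 [sw0 zw0]]] z_notin] := ginfinite_notin (map (eval_word b) (words D #|S|)) L_inf.
pose P w := [&& word_over D w, delta_star delta s0 w == s & eval_word b w == z].
have P_words w : word_over D w -> delta_star delta s0 w = s -> eval_word b w = z ->
    has P (words D (size w)).
  by move=> Dw sw zw; apply/hasP; exists w; rewrite ?words_spec /P Dw ?sw ?zw ?eqxx /=.
have P_ex : exists n, has P (words D n) by exists (size w0); exact: P_words.
case: (ex_minnP P_ex) => n /hasP [w w_in /and3P [Dw /eqP sw /eqP zw]] n_min.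
move: w_in; rewrite words_spec Dw /= => le_wn.
exists w; split => //.
  rewrite ltnNge; apply: contra z_notin => short.
  by rewrite -zw map_f // words_spec Dw /=.
move=> w' Dw' sw' zw'; apply: (leq_trans le_wn).
by apply/n_min/P_words; rewrite ?zw' ?zw.
Qed.

Lemma val_lang_pumped_family : ginfinite L ->
  exists (z : nat -> gint) (m : nat) (c : gint),
    [/\ (0 < m)%N, forall k, L (z k),
        forall k, z k.+1 = gadd (gmul (z k) (gpow b m)) c & z 1 != z 0].
Proof.
case/val_lang_long_shortest => w [Dw sw long w_min].
have [u [v [x [w_uvx v_nil loop]]]] := dfa_pumping delta s0 long.
have Dpump k : word_over D (pump u v x k) by rewrite word_over_pump -?w_uvx.
have spump k : delta_star delta s0 (pump u v x k) = s by rewrite delta_star_pump // -w_uvx.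
exists (fun k => eval_word b (pump u v x k)), (size v),
  (gsub (eval_word b (v ++ x)) (gmul (eval_word b x) (gpow b (size v)))).
split=> [||k|]; first by rewrite lt0n size_eq0.
- by move=> k; exists (pump u v x k).
- exact: eval_pumpS.
apply/eqP => eval_pump10.
have pump1 : pump u v x 1 = w by rewrite w_uvx /pump /= cats0.
have := w_min _ (Dpump 0%N) (spump 0%N); rewrite -{1}pump1 eval_pump10 => /(_ erefl).
rewrite {1}w_uvx /pump /= !size_cat leq_add2l -{2}[size x]add0n leq_add2r.
by rewrite leqNgt lt0n size_eq0 v_nil.
Qed.
End ValueLanguage.

Theorem lemma3p4 (alpha beta : gint) (Dalpha Dbeta : seq gint)
  (Salpha Sbeta : finType) (A : Type)
  (delta_alpha : Salpha -> gint -> Salpha) (s0_alpha : Salpha) (tau_alpha : Salpha -> A)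
  (delta_beta : Sbeta -> gint -> Sbeta) (s0_beta : Sbeta) (tau_beta : Sbeta -> A)
  (a : gint -> A) :
  1 < gnorm2 alpha -> 1 < gnorm2 beta ->
  g0 \in Dalpha -> g0 \in Dbeta ->
  all_expansions alpha Dalpha -> all_expansions beta Dbeta ->
  consistent_generates alpha Dalpha delta_alpha s0_alpha tau_alpha a ->
  consistent_generates beta Dbeta delta_beta s0_beta tau_beta a ->
  ~ root_of_integer beta ->
  forall s : Sbeta,
    ginfinite (in_val_lang beta Dbeta delta_beta s0_beta s) ->
    exists (t : Salpha) (x y z : gint),
      [/\ in_val_lang beta Dbeta delta_beta s0_beta s x
        /\ in_val_lang alpha Dalpha delta_alpha s0_alpha t x,
          in_val_lang beta Dbeta delta_beta s0_beta s y
        /\ in_val_lang alpha Dalpha delta_alpha s0_alpha t y,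
          in_val_lang beta Dbeta delta_beta s0_beta s z
        /\ in_val_lang alpha Dalpha delta_alpha s0_alpha t z
        & ~ gcollinear x y z].
Proof.
move=> _ beta_norm _ _ alpha_exp _ _ _ not_root s s_inf.
have [z [m [c [m_gt0 Lz z_rec z10]]]] := val_lang_pumped_family s_inf.
have g_norm : 2 <= gnorm2 (gpow beta m).
  by rewrite gnorm2X (le_trans _ (ler_eXnr _ _)) ?(ltW beta_norm) //; lia.
have g_nonreal n : (0 < n)%N -> (gpow (gpow beta m) n).2 != 0.
  move=> n_gt0; apply/eqP => im0; apply: not_root.
  by exists (m * n)%N; rewrite muln_gt0 m_gt0 n_gt0 gpowM.
pose n := (2 * #|Salpha|)%N.
have /fin_all_exists [st Lst] : forall i : 'I_n.+1, exists t : Salpha,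
    in_val_lang alpha Dalpha delta_alpha s0_alpha t (z (spread n i)).
  move=> i; have [w [Dw zw]] := alpha_exp (z (spread n i)).
  by exists (delta_star delta_alpha s0_alpha w), w.
have [i [j [k [ijk st_j st_k]]]] := pigeonhole3 st (ltnSn n).
have [d [e [sj sk de ed]]] := spread_gaps ijk (ltn_ord k : k <= n)%N.
exists (st i), (z (spread n i)), (z (spread n j)), (z (spread n k)).
split; [split=> // | split=> //; rewrite -st_j | split=> //; rewrite -st_k | ].
- exact: Lst.
- exact: Lst.
rewrite sj sk; exact: (affine_rec_noncollinear g_norm g_nonreal (a := spread n i) z_rec z10 de ed).
Qed.
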